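(* For every $\mu>0$: (i) $q_\mu:\mathbb{R}^n\to\mathbb{R}\cup\{\infty\}$ is proper and lower semicontinuous, with $\operatorname{dom} q_\mu=\operatorname{dom} g\cap\{z : c(z)<0\}$ and $\inf q_\mu\in\mathbb{R}$; (ii) $f_\mu$ has locally Lipschitz continuous gradient on $\operatorname{dom} f_\mu=\{z : c(z)<0\}$.
   Context: Let $f:\mathbb{R}^n\to\mathbb{R}$ have locally Lipschitz continuous gradient; let $g:\mathbb{R}^n\to\mathbb{R}\cup\{\infty\}$ be proper, lower semicontinuous, prox-bounded (i.e. $g+\frac{1}{2\gamma}\|\cdot\|^2$ is bounded below for some $\gamma>0$), and continuous relative to $\operatorname{dom} g$ (whenever $\operatorname{dom} g\ni x^k\to x$ one has $g(x^k)\to g(x)$); let $c:\mathbb{R}^n\to\mathbb{R}^m$ have locally Lipschitz continuous Jacobian. Let $q=f+g$, assume $\inf\{q(x): c(x)\le 0\}\in\mathbb{R}$ and that $F=\operatorname{dom} q\cap\{x: c(x)<0\}\neq\emptyset$. Let $b:\mathbb{R}\to[0,\infty]$ satisfy $\operatorname{dom} b=(-\infty,0)$, $b$ twice continuously differentiable with $b'>0$ on $(-\infty,0)$, and $b(t)\to\infty$ as $t\to0^-$. For $\mu>0$ define $f_\mu(z)=f(z)+\mu\sum_{i=1}^m b(c_i(z))$ (equal to $\infty$ unless $c(z)<0$) and $q_\mu=f_\mu+g$. *)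

(* R^n is modelled as row vectors 'rV[R]_n over R : realType. *)
From HB Require Import structures.
From mathcomp Require Import all_boot all_order all_algebra.
From mathcomp Require Import all_classical all_reals all_analysis.
Set Implicit Arguments. Unset Strict Implicit. Unset Printing Implicit Defensive.
Import Order.TTheory GRing.Theory Num.Theory.
Import numFieldNormedType.Exports.
Local Open Scope classical_set_scope.
Local Open Scope ring_scope.

Section Defs.
Variable R : realType.

Definition evec (n : nat) (i : 'I_n) : 'rV[R]_n := delta_mx 0 i.

(* gradient of f : R^n -> R at x (meaningful when f is differentiable at x) *)
Definition grad (n : nat) (f : 'rV[R]_n -> R) (x : 'rV[R]_n) : 'rV[R]_n :=
  \row_(i < n) ('d f x) (evec i).

Definition jacobian (n m : nat) (c : 'rV[R]_n -> 'rV[R]_m) (x : 'rV[R]_n)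
  : 'M[R]_(m, n) :=
  \matrix_(i < m, j < n) (('d c x) (evec j)) ord0 i.

Definition loc_lipschitz_on {U V : normedModType R} (A : set U) (F : U -> V) :=
  forall x, A x -> exists2 e : R, 0 < e &
    exists L : R, forall y z, ball x e y -> ball x e z -> A y -> A z ->
      `|F y - F z| <= L * `|y - z|.

Definition loc_lip_grad_on (n : nat) (A : set 'rV[R]_n) (f : 'rV[R]_n -> R) :=
  (forall x, A x -> differentiable f x) /\ loc_lipschitz_on A (grad f).

Definition loc_lip_jacobian (n m : nat) (c : 'rV[R]_n -> 'rV[R]_m) :=
  (forall x, differentiable c x) /\ loc_lipschitz_on setT (jacobian c).

Definition sqnorm (n : nat) (x : 'rV[R]_n) : R := \sum_(i < n) (x ord0 i) ^+ 2.

Definition edom (n : nat) (h : 'rV[R]_n -> \bar R) : set 'rV[R]_n :=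
  [set x | h x < +oo]%E.

Definition eproper (n : nat) (h : 'rV[R]_n -> \bar R) :=
  (forall x, h x != -oo)%E /\ exists x, (h x < +oo)%E.

Definition prox_bounded (n : nat) (g : 'rV[R]_n -> \bar R) :=
  exists2 gam : R, 0 < gam & exists beta : R,
    forall x, (beta%:E <= g x + (sqnorm x / (2 * gam))%:E)%E.

Definition cont_rel_dom (n : nat) (g : 'rV[R]_n -> \bar R) :=
  forall (u : nat -> 'rV[R]_n) (x : 'rV[R]_n),
    (forall k, edom g (u k)) -> u @ \oo --> x -> g \o u @ \oo --> g x.

Definition strict_feas (n m : nat) (c : 'rV[R]_n -> 'rV[R]_m) : set 'rV[R]_n :=
  [set z | forall i, c z ord0 i < 0].

Definition barrier (b : R -> \bar R) :=
  [/\ (forall t, (0 <= b t)%E),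
      (forall t, b t \is a fin_num <-> t < 0),
      (forall t, t < 0 -> [/\ derivable (fine \o b) t 1,
                             derivable (derive1 (fine \o b)) t 1 &
                             {for t, continuous (derive1 (derive1 (fine \o b)))}]),
      (forall t, t < 0 -> 0 < derive1 (fine \o b) t) &
      (b t @[t --> 0^'-] --> +oo%E)].

(* f_mu(z) = f(z) + mu * sum_i b(c_i(z))  (= +oo unless c(z) < 0) *)
Definition fmu (n m : nat) (f : 'rV[R]_n -> R) (c : 'rV[R]_n -> 'rV[R]_m)
  (b : R -> \bar R) (mu : R) (z : 'rV[R]_n) : \bar R :=
  ((f z)%:E + mu%:E * \sum_(i < m) b (c z ord0 i))%E.

Definition qmu (n m : nat) (f : 'rV[R]_n -> R) (g : 'rV[R]_n -> \bar R)
  (c : 'rV[R]_n -> 'rV[R]_m) (b : R -> \bar R) (mu : R) (z : 'rV[R]_n) : \bar R :=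
  (fmu f c b mu z + g z)%E.

End Defs.

From Pilot Require Import Defs.
From HB Require Import structures.
From mathcomp Require Import all_boot all_order all_algebra.
From mathcomp Require Import all_classical all_reals all_analysis.
From mathcomp Require Import lra.
Import Order.TTheory GRing.Theory Num.Theory.
Import numFieldNormedType.Exports.
Local Open Scope classical_set_scope.
Local Open Scope ring_scope.

(* Off the open set {c < 0} some b(c_i z) is +oo, so f_mu = +oo there; on it
   the penalty is finite and f_mu agrees with the smooth function
   f + mu * sum_i b(c_i), with gradient grad f + mu * sum_i b'(c_i) grad c_i.
   Lower semicontinuity of q_mu comes from that of b (continuous on (-oo, 0),
   +oo on [0, +oo) and tending to +oo at 0-) composed with the continuous c_i.
   Since the penalty is nonnegative, inf q_mu is bounded below by the
   constrained infimum of f + g, and it is finite at any strictly feasible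
   point of dom g.  The gradient is locally Lipschitz because grad f, the
   Jacobian of c and b' are, and sums, products and compositions of locally
   Lipschitz maps are locally Lipschitz; c_i and b' are locally Lipschitz by
   the mean value theorem, their derivatives being locally bounded. *)

Section lower_semicontinuous.
Context {R : realType} {X : topologicalType}.
Local Open Scope ereal_scope.

Lemma lte_splitD {a : R} {x y : \bar R} : x != -oo -> y != -oo ->
  a%:E < x + y -> exists2 a1 : R, a1%:E < x & (a - a1)%:E < y.
Proof.
case: x => [r| |] //; case: y => [s| |] // _ _.
- rewrite -EFinD lte_fin => ars.
  by exists (r - (r + s - a) / 2)%R; rewrite lte_fin; lra.
- by move=> _; exists (r - 1)%R; rewrite ?ltry // lte_fin; lra.
- by move=> _; exists (a - s + 1)%R; rewrite ?ltry // lte_fin; lra.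
- by move=> _; exists a; rewrite ltry.
Qed.

Lemma lower_semicontinuousD (F G : X -> \bar R) :
  (forall x, F x != -oo) -> (forall x, G x != -oo) ->
  lower_semicontinuous F -> lower_semicontinuous G ->
  lower_semicontinuous (F \+ G).
Proof.
move=> FNy GNy lscF lscG x a /(lte_splitD (FNy x) (GNy x))[a1 /lscF[U Ux FU]].
move=> /lscG[V Vx GV]; exists (U `&` V); first exact: filterI.
by move=> y [/FU Fy /GV Gy]; rewrite -(subrKC a1 a) EFinD lteD.
Qed.

Lemma lower_semicontinuousZl (mu : R) (F : X -> \bar R) : (0 < mu)%R ->
  lower_semicontinuous F -> lower_semicontinuous (fun x => mu%:E * F x).
Proof.
move=> mu0 lscF x a; rewrite -lte_pdivrMl // -EFinM => /lscF[U Ux FU].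
by exists U => // y /FU; rewrite -lte_pdivrMl // -EFinM.
Qed.

Lemma lower_semicontinuous_comp {Y : topologicalType} (G : X -> Y)
    (F : Y -> \bar R) :
  continuous G -> lower_semicontinuous F -> lower_semicontinuous (F \o G).
Proof.
move=> cG lscF x a /lscF[U GxU FU].
by exists (G @^-1` U); [exact: cG | move=> y /FU].
Qed.

Lemma lower_semicontinuous_EFin (f : X -> R) :
  continuous f -> lower_semicontinuous (EFin \o f).
Proof.
move=> cf; apply: lower_semicontinuous_comp cf _ => t a; rewrite lte_fin => at_.
by exists (fun s => a < s)%R; [exact: lt_nbhsr | move=> s; rewrite lte_fin].
Qed.

Lemma lower_semicontinuous_sum (I : Type) (r : seq I) (F : I -> X -> \bar R) :
  (forall i x, 0 <= F i x) -> (forall i, lower_semicontinuous (F i)) ->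
  lower_semicontinuous (fun x => \sum_(i <- r) F i x).
Proof.
move=> F0 lscF; elim: r => [|j r IHr].
  move=> x a; rewrite big_nil => a0.
  by exists setT; [exact: filterT | move=> y _; rewrite big_nil].
have -> : (fun x => \sum_(i <- j :: r) F i x) =
          F j \+ (fun x => \sum_(i <- r) F i x).
  by apply/funext => x; rewrite big_cons.
apply: lower_semicontinuousD => // x; rewrite -ltNye.
  exact: lt_le_trans (F0 j x).
by apply: lt_le_trans (sume_ge0 _ _) => // i _; exact: F0.
Qed.

End lower_semicontinuous.

Lemma normr_mx_entry_le {R : realFieldType} {p q} (A : 'M[R]_(p, q)) i j :
  `|A i j| <= `|A|.
Proof.
rewrite [leRHS]/Num.Def.normr /= mx_normrE.
exact: le_trans (le_bigmax _ _ (i, j)).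
Qed.

Lemma normr_row_le {R : realFieldType} {p q} (A : 'M[R]_(p, q)) i :
  `|row i A| <= `|A|.
Proof.
rewrite [leLHS]/Num.Def.normr /= mx_normrE; apply: bigmax_le => // -[k j] _.
by rewrite mxE; exact: normr_mx_entry_le.
Qed.

Definition lipschitz_at {R : realFieldType} {V W : normedModType R}
    (x : V) (F : V -> W) :=
  exists2 e : R, 0 < e & exists2 L : R, 0 <= L &
    forall y z, ball x e y -> ball x e z -> `|F y - F z| <= L * `|y - z|.

Section lipschitz_ball.
Context {R : realFieldType} {V W : normedModType R}.
Implicit Types (x : V) (e L : R).

Lemma ball_min x e1 e2 : ball x (Num.min e1 e2) `<=` ball x e1 `&` ball x e2.
Proof. by move=> y xy; split; apply: le_ball xy; rewrite ge_min lexx ?orbT. Qed.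

Lemma lipschitz_ball_bound x e L (F : V -> W) : 0 < e ->
  (forall y z, ball x e y -> ball x e z -> `|F y - F z| <= L * `|y - z|) ->
  forall y, ball x e y -> `|F y| <= `|F x| + `|L| * e.
Proof.
move=> e0 FL y xy; rewrite -[F y](subrK (F x)) addrC.
apply: le_trans (ler_normD _ _) _; rewrite lerD2l.
apply: le_trans (FL y x xy (ballxx x e0)) _.
apply: le_trans (ler_norm _) _; rewrite normrM normr_id ler_wpM2l //.
by move: xy; rewrite -ball_normE /= distrC => /ltW.
Qed.

End lipschitz_ball.

Section lipschitz_at.
Context {R : realFieldType} {V W : normedModType R}.
Implicit Types x : V.

Lemma lipschitz_at_cst x (w : W) : lipschitz_at x (fun=> w).
Proof.
by exists 1 => //; exists 0 => // y z _ _; rewrite subrr normr0 mul0r.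
Qed.

Lemma lipschitz_atD x (F G : V -> W) :
  lipschitz_at x F -> lipschitz_at x G -> lipschitz_at x (F \+ G).
Proof.
move=> [e1 e1_gt0 [L1 L1_ge0 FL]] [e2 e2_gt0 [L2 L2_ge0 GL]].
exists (Num.min e1 e2); first by rewrite lt_min e1_gt0 e2_gt0.
exists (L1 + L2) => [|y z /ball_min[y1 y2] /ball_min[z1 z2]].
  exact: addr_ge0.
rewrite /= opprD addrACA mulrDl.
by apply: le_trans (ler_normD _ _) _; apply: lerD; [exact: FL | exact: GL].
Qed.

Lemma lipschitz_at_sum x (I : Type) (r : seq I) (F : I -> V -> W) :
  (forall i, lipschitz_at x (F i)) ->
  lipschitz_at x (fun y => \sum_(i <- r) F i y).
Proof.
move=> FL; elim: r => [|j r IHr].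
  under eq_fun do rewrite big_nil; exact: lipschitz_at_cst.
under eq_fun do rewrite big_cons; exact: lipschitz_atD.
Qed.

Lemma lipschitz_atZ x (F : V -> R) (G : V -> W) :
  lipschitz_at x F -> lipschitz_at x G -> lipschitz_at x (fun y => F y *: G y).
Proof.
move=> [e1 e1_gt0 [L1 L1_ge0 FL]] [e2 e2_gt0 [L2 L2_ge0 GL]].
set M1 := `|F x| + `|L1| * e1; set M2 := `|G x| + `|L2| * e2.
have M1_ge0 : 0 <= M1 by apply: addr_ge0; rewrite // mulr_ge0 // ltW.
have M2_ge0 : 0 <= M2 by apply: addr_ge0; rewrite // mulr_ge0 // ltW.
exists (Num.min e1 e2); first by rewrite lt_min e1_gt0 e2_gt0.
exists (M1 * L2 + M2 * L1) => [|y z /ball_min[y1 y2] /ball_min[z1 z2]].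
  by rewrite addr_ge0 ?mulr_ge0.
have -> : F y *: G y - F z *: G z = F y *: (G y - G z) + (F y - F z) *: G z.
  by rewrite scalerBr scalerBl addrA subrK.
apply: le_trans (ler_normD _ _) _.
rewrite mulrDl !normrZ -!mulrA [M2 * _]mulrC.
apply: lerD; apply: ler_pM => //.
- exact: lipschitz_ball_bound e1_gt0 FL y y1.
- exact: GL.
- exact: FL.
- exact: lipschitz_ball_bound e2_gt0 GL z z2.
Qed.

Lemma lipschitz_at_comp {U : normedModType R} x (F : V -> U) (G : U -> W) :
  lipschitz_at x F -> lipschitz_at (F x) G -> lipschitz_at x (G \o F).
Proof.
move=> [e1 e1_gt0 [L1 L1_ge0 FL]] [e2 e2_gt0 [L2 L2_ge0 GL]].
have L1_gt0 : 0 < L1 + 1 by rewrite ltr_wpDl.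
have FxF y : ball x (e2 / (L1 + 1)) y -> ball x e1 y -> ball (F x) e2 (F y).
  rewrite -!ball_normE /= ltr_pdivlMr // => xy1 xy2.
  apply: le_lt_trans (FL x y (ballxx x e1_gt0) _) _; rewrite -?ball_normE //.
  by apply: le_lt_trans xy1; rewrite mulrDr mulr1 mulrC lerDl.
exists (Num.min e1 (e2 / (L1 + 1))); first by rewrite lt_min e1_gt0 divr_gt0.
exists (L2 * L1) => [|y z /ball_min[y1 y2] /ball_min[z1 z2]].
  exact: mulr_ge0.
apply: le_trans (GL _ _ (FxF y y2 y1) (FxF z z2 z1)) _.
by rewrite -mulrA ler_wpM2l // FL.
Qed.

Lemma lipschitz_at_row x {p q} (M : V -> 'M[R]_(p, q)) i :
  lipschitz_at x M -> lipschitz_at x (fun y => row i (M y)).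
Proof.
move=> [e e_gt0 [L L_ge0 ML]]; exists e => //; exists L => // y z xy xz.
by rewrite -linearB /=; apply: le_trans (normr_row_le _ _) (ML y z xy xz).
Qed.

End lipschitz_at.

Section differential.
Context {R : realType} {V W : normedModType R}.

Lemma near_eq_is_diff (F G : V -> W) x :
  (\near x, F x = G x) -> differentiable G x -> is_diff x F ('d G x).
Proof.
move=> FG dG; have FGx : F x = G x := nbhs_singleton FG.
have shiftx : (fun h => h + x) @ 0 --> x.
  rewrite -[x in _ --> x]add0r.
  by apply: cvgD; [exact: cvg_id | exact: cvg_cst].
have FG0 : \forall h \near 0, F (h + x) = G (h + x) := shiftx _ FG.
have Fo : F \o shift x = cst (F x) + 'd G x +o_ 0 id.
  apply/eqaddoP => eps eps_gt0.
  have /eqaddoP/(_ eps eps_gt0) := diff_locally dG.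
  by apply: filterS2 FG0 => h FGh; rewrite !fctE /= FGh FGx.
have dF : 'd F x = 'd G x :> (V -> W) := diff_unique (diff_continuous dG) Fo.
apply: DiffDef => //; apply/diff_locallyP; rewrite dF.
by split => //; exact: diff_continuous.
Qed.

Lemma is_diff_sum {k} {F dF : 'I_k -> V -> W} {x} :
  (forall i, is_diff x (F i) (dF i)) ->
  is_diff x (\sum_(i < k) F i) (\sum_(i < k) dF i).
Proof.
move=> dFi; elim/big_ind2 : _ => [|dF1 F1 dF2 F2 dF1P dF2P|i _] //.
  exact: is_diff_cst.
exact: is_diffD dF1P dF2P.
Qed.

Lemma is_diff_mx_coord {p q} {F : V -> 'M[R]_(p, q)} i j {x} :
  differentiable F x -> is_diff x (fun z => F z i j) (fun v => 'd F x v i j).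
Proof.
move=> dF; have coord_lin : linear (fun A : 'M[R]_(p, q) => A i j).
  by move=> a A B; rewrite !mxE.
pose coord : {linear 'M[R]_(p, q) -> R} :=
  HB.pack (fun A : 'M[R]_(p, q) => A i j)
    (GRing.isLinear.Build _ _ _ _ _ coord_lin).
have coordP : is_diff (F x) coord coord.
  have coord_cont : continuous coord := @coord_continuous _ p q i j.
  by apply: DiffDef; [exact: linear_differentiable | exact: diff_lin].
exact: (is_diff_comp (differentiableP dF) coordP).
Qed.

End differential.

Section mean_value.
Context {R : realType} {V : normedModType R}.

Lemma lipschitz_at_diff_bounded (F : V -> R) x (e M : R) : 0 < e ->
  (forall y, ball x e y -> differentiable F y) ->
  (forall y v, ball x e y -> `|'d F y v| <= M * `|v|) ->
  lipschitz_at x F.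
Proof.
(* The segment [z, y] between two points of ball x (e / 3) stays in ball x e. *)
move=> e_gt0 dF dFM; exists (e / 3); first by rewrite divr_gt0.
exists `|M| => // y z; rewrite -!ball_normE /= => xy xz.
set v := y - z; pose p (s : R) := z + s *: v.
have p_ball (s : R) : 0 <= s <= 1 -> ball x e (p s).
  move=> /andP[s_ge0 s_le1]; rewrite -ball_normE /= opprD addrA.
  apply: le_lt_trans (ler_normB _ _) _; rewrite normrZ ger0_norm //.
  have : `|v| <= `|x - y| + `|x - z|.
    by apply: le_trans (ler_distD x y z) _; rewrite distrC.
  have := normr_ge0 v; nra.
have Fp_derive (s : R) :
    0 <= s <= 1 -> is_derive s 1 (F \o p) ('d F (p s) v).
  move=> /p_ball/dF/differentiableP dFp.
  have pP : is_diff s p (0 + *:%R^~ v).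
    have -> : p = cst z + *:%R^~ v by apply/funext.
    exact: is_diffD (is_diff_cst z s) (is_diff_scalel s v).
  have FpP := is_diff_comp pP dFp.
  apply: DeriveDef; first exact: diff_derivable.
  by rewrite deriveE // diff_val /= add0r scale1r.
have [s /[1!in_itv] /= s01 Fyz] : exists2 s, s \in `[0, 1] &
    (F \o p) 1 - (F \o p) 0 = 'd F (p s) v * (1 - 0).
  apply: MVT_segment => // [s|].
    by rewrite in_itv /= => /andP[s_gt0 s_lt1]; apply: Fp_derive; rewrite !ltW.
  apply: derivable_within_continuous => s; rewrite in_itv /= => s01.
  by have [] := Fp_derive s s01.
move: Fyz; rewrite /p /= scale1r scale0r addr0 subrKC subr0 mulr1 => ->.
apply: le_trans (dFM _ _ (p_ball s s01)) _.
by rewrite ler_wpM2r ?ler_norm.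
Qed.

End mean_value.

Lemma lipschitz_at_loc_lipschitz_onT {R : realType} {V W : normedModType R}
    (F : V -> W) x :
  loc_lipschitz_on setT F -> lipschitz_at x F.
Proof.
move=> /(_ x I)[e e_gt0 [L FL]]; exists e => //; exists `|L| => // y z xy xz.
by apply: le_trans (FL y z xy xz I I) _; rewrite ler_wpM2r ?ler_norm.
Qed.

Lemma loc_lipschitz_on_lipschitz_at {R : realType} {V W : normedModType R}
    (A : set V) (F G : V -> W) :
  (forall x, A x -> F x = G x) -> (forall x, A x -> lipschitz_at x G) ->
  loc_lipschitz_on A F.
Proof.
move=> FG GL x Ax; have [e e_gt0 [L _ GLe]] := GL x Ax.
by exists e => //; exists L => y z xy xz Ay Az; rewrite !FG //; exact: GLe.
Qed.

Lemma diff_rV_jacobianE {R : realType} {n m} (F : 'rV[R]_n -> 'rV[R]_m) x v i :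
  'd F x v ord0 i = \sum_(j < n) v ord0 j * Defs.jacobian F x i j.
Proof.
rewrite {1}(row_sum_delta v) linear_sum summxE; apply: eq_bigr => j _.
by rewrite linearZ !mxE.
Qed.

Lemma lipschitz_at_rV_coord {R : realType} {n m} (F : 'rV[R]_n -> 'rV[R]_m)
    x i :
  (forall y, differentiable F y) -> loc_lipschitz_on setT (Defs.jacobian F) ->
  lipschitz_at x (fun y => F y ord0 i).
Proof.
move=> dF /(lipschitz_at_loc_lipschitz_onT _ x)[e e_gt0 [L _ JL]].
(* Being Lipschitz near x, the Jacobian is bounded by M there. *)
set M := `|Defs.jacobian F x| + `|L| * e.
apply: (@lipschitz_at_diff_bounded _ _ _ _ e (M *+ n)) => // [y _|y v xy].
  by have := is_diff_mx_coord ord0 i (dF y).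
have := is_diff_mx_coord ord0 i (dF y) => coordP; rewrite diff_val /=.
rewrite diff_rV_jacobianE; apply: le_trans (ler_norm_sum _ _ _) _.
apply: (@le_trans _ _ (\sum_(j < n) `|v| * M)).
  apply: ler_sum => j _; rewrite normrM; apply: ler_pM => //.
    exact: normr_mx_entry_le.
  apply: le_trans (normr_mx_entry_le _ i j) _.
  exact: lipschitz_ball_bound e_gt0 JL y xy.
by rewrite sumr_const card_ord -mulrnAr mulrC.
Qed.

Section barrier.
Context {R : realType} {b : R -> \bar R}.
Hypothesis hb : barrier b.

Lemma barrier_ge0 t : (0 <= b t)%E.
Proof. by case: hb. Qed.

Lemma barrier_fin {t} : t < 0 -> b t = (fine (b t))%:E.
Proof. by case: hb => _ bfin _ _ _ t_lt0; rewrite fineK //; apply/bfin. Qed.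

Lemma barrier_pinfty {t} : 0 <= t -> b t = +oo%E.
Proof.
case: hb => b_ge0 bfin _ _ _ t_ge0; move: (b_ge0 t) (bfin t).
by case: (b t) => [r| |] //= _ [/(_ isT)]; rewrite ltNge t_ge0.
Qed.

Lemma barrier_derivable {t} : t < 0 -> derivable (fine \o b) t 1.
Proof. by case: hb => _ _ db _ _ /db[]. Qed.

Lemma lower_semicontinuous_barrier : lower_semicontinuous b.
Proof.
move=> t a; case: (ltgtP t 0) => [t_lt0|t_gt0|->] abt.
- rewrite barrier_fin // lte_fin in abt.
  have /derivable1_diffP/differentiable_continuous bt :=
    barrier_derivable t_lt0.
  exists ([set s | a < fine (b s)] `&` [set s | s < 0]).
    by apply: filterI; [exact: bt (lt_nbhsr abt) | exact: lt_nbhsl t_lt0].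
  by move=> s [abs s_lt0]; rewrite barrier_fin // lte_fin.
- exists [set s | 0 < s]; first exact: lt_nbhsr t_gt0.
  by move=> s s_gt0; rewrite barrier_pinfty ?ltry // ltW.
- have [_ _ _ _ /cvgeyPgt/(_ a) b0] := hb.
  exists (fun s => s < 0 -> (a%:E < b s)%E) => // s.
  by case: (ltP s 0) => [_ /(_ isT)|s_ge0 _] //; rewrite barrier_pinfty ?ltry.
Qed.

Lemma lipschitz_at_barrier_derive1 (t : R) :
  t < 0 -> lipschitz_at t (derive1 (fine \o b)).
Proof.
move=> t_lt0; set H := derive1 (fine \o b).
have [_ _ /(_ t t_lt0)[_ _ H'_cont] _ _] := hb.
have /nbhs_ballP[d d_gt0 H'_near] :
    \forall s \near t, `|derive1 H t - derive1 H s| < 1.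
  exact: (@cvgr_dist_lt _ _ _ _ _ (derive1 H) _ H'_cont 1 ltr01).
have ball_neg s : ball t (Num.min d (- t)) s -> ball t d s /\ s < 0.
  move=> /ball_min[td]; rewrite -ball_normE /= => ts; split => //.
  by move: (ler_norm (s - t)); rewrite distrC; lra.
apply: (@lipschitz_at_diff_bounded _ _ _ _ (Num.min d (- t))
  (`|derive1 H t| + 1)).
- by rewrite lt_min d_gt0 oppr_gt0.
- move=> s /ball_neg[_ s_lt0].
  by have [_ _ /(_ s s_lt0)[_ dH _] _ _] := hb; apply/derivable1_diffP.
- move=> s v /ball_neg[/H'_near ts s_lt0].
  have [_ _ /(_ s s_lt0)[_ dH _] _ _] := hb.
  rewrite diff1E -?derivable1_diffP // normrZ mulrC ler_wpM2r //.
  rewrite -[derive1 H s](subrKC (derive1 H t)) (le_trans (ler_normD _ _)) //.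
  by rewrite lerD2l distrC ltW.
Qed.

End barrier.

Lemma continuous_mx_coord {R : realType} {T : topologicalType} {p q}
    (F : T -> 'M[R]_(p, q)) i j :
  continuous F -> continuous (fun z => F z i j).
Proof.
move=> cF z; apply: (@continuous_comp _ _ _ F (fun A : 'M[R]_(p, q) => A i j)).
  exact: cF.
exact: coord_continuous.
Qed.

Lemma strict_feas_near {R : realType} {n m} {c : 'rV[R]_n -> 'rV[R]_m} {z} :
  continuous c -> strict_feas c z -> \forall y \near z, strict_feas c y.
Proof.
move=> cc cz.
apply: (@filter_forall _ _ (fun i y => c y ord0 i < 0) (nbhs z) _) => i.
exact: continuous_mx_coord cc z _ (lt_nbhsl (cz i)).
Qed.

(* Agrees with fmu on strict_feas c (fmu_fin); elsewhere [fine] sends the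
   infinite barrier values to 0. *)
Definition fmu_smooth {R : realType} {n m : nat} (f : 'rV[R]_n -> R)
    (c : 'rV[R]_n -> 'rV[R]_m) (b : R -> \bar R) (mu : R) z :=
  f z + mu * \sum_(i < m) fine (b (c z ord0 i)).

Section barrier_penalty.
Context {R : realType} {n m : nat} (f : 'rV[R]_n -> R)
  (c : 'rV[R]_n -> 'rV[R]_m) {b : R -> \bar R} {mu : R}.
Hypotheses (hb : barrier b) (mu_gt0 : 0 < mu).

Lemma barrier_sum_ge0 z (P : pred 'I_m) :
  (0 <= \sum_(i < m | P i) b (c z ord0 i))%E.
Proof. by apply: sume_ge0 => i _; exact: barrier_ge0. Qed.

Lemma fmu_fin z :
  strict_feas c z -> fmu f c b mu z = (fmu_smooth f c b mu z)%:E.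
Proof.
move=> cz; rewrite /fmu.
under eq_bigr => i _ do rewrite (barrier_fin hb (cz i)).
by rewrite sumEFin -EFinM -EFinD.
Qed.

Lemma fmu_pinfty z : ~ strict_feas c z -> fmu f c b mu z = +oo%E.
Proof.
move=> /existsNP[i /negP]; rewrite -leNgt => ci_ge0.
rewrite /fmu (bigD1 i) //= (barrier_pinfty hb ci_ge0) addye.
  by rewrite gt0_muley ?lte_fin // addey.
by rewrite -ltNye (lt_le_trans _ (barrier_sum_ge0 _ _)).
Qed.

Lemma penalty_ge0 z : (0 <= mu%:E * \sum_(i < m) b (c z ord0 i))%E.
Proof. by rewrite mule_ge0 ?barrier_sum_ge0 // lee_fin; exact: ltW. Qed.

Lemma fmu_ge z : ((f z)%:E <= fmu f c b mu z)%E.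
Proof. by rewrite leeDl // penalty_ge0. Qed.

Lemma fmu_neqNy z : fmu f c b mu z != -oo%E.
Proof. by rewrite -ltNye (lt_le_trans _ (fmu_ge z)) ?ltNyr. Qed.

Lemma edom_fmu : edom (fmu f c b mu) = strict_feas c.
Proof.
apply/seteqP; split => z; rewrite /edom /=.
  by apply: contraPP => /fmu_pinfty ->; rewrite ltxx.
by move=> /fmu_fin ->; rewrite ltry.
Qed.

Lemma lower_semicontinuous_fmu :
  continuous f -> continuous c -> lower_semicontinuous (fmu f c b mu).
Proof.
move=> cf cc; apply: lower_semicontinuousD => //.
- by move=> z; rewrite -ltNye (lt_le_trans _ (penalty_ge0 z)).
- exact: lower_semicontinuous_EFin.
apply: lower_semicontinuousZl => //; apply: lower_semicontinuous_sum.
  by move=> i z; exact: barrier_ge0.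
move=> i; apply: lower_semicontinuous_comp (lower_semicontinuous_barrier hb).
exact: continuous_mx_coord.
Qed.

End barrier_penalty.

Lemma adde_neqNy {R : realType} (x y : \bar R) :
  x != -oo%E -> y != -oo%E -> (x + y != -oo)%E.
Proof. by move: x y => [x| |] [y| |]. Qed.

Section barrier_objective.
Context {R : realType} {n m : nat} (f : 'rV[R]_n -> R) (g : 'rV[R]_n -> \bar R)
  (c : 'rV[R]_n -> 'rV[R]_m) {b : R -> \bar R} {mu : R}.
Hypotheses (hb : barrier b) (mu_gt0 : 0 < mu) (gNy : forall z, g z != -oo%E).
Local Open Scope ereal_scope.

Lemma qmu_neqNy z : qmu f g c b mu z != -oo.
Proof. exact: adde_neqNy (fmu_neqNy f c hb mu_gt0 z) (gNy z). Qed.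

Lemma qmu_lty z :
  (qmu f g c b mu z < +oo) = (g z < +oo) && (fmu f c b mu z < +oo).
Proof.
by rewrite /qmu !ltey adde_Neq_pinfty ?(fmu_neqNy f c hb mu_gt0) // andbC.
Qed.

Lemma edom_qmu : edom (qmu f g c b mu) = edom g `&` strict_feas c.
Proof.
rewrite -(edom_fmu f c hb mu_gt0); apply/seteqP.
by split => z; rewrite /edom /= qmu_lty; [move/andP | move=> [-> ->]].
Qed.

Lemma qmu_inf_fin_num :
  ereal_inf [set (f x)%:E + g x | x in [set x | forall i, (c x ord0 i <= 0)%R]]
    \is a fin_num ->
  (exists x, edom g x /\ strict_feas c x) ->
  ereal_inf (range (qmu f g c b mu)) \is a fin_num.
Proof.
set S := [set _ | _ in _] => S_fin [x [gx cx]].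
have infS_le : ereal_inf S <= ereal_inf (range (qmu f g c b mu)).
  apply/ereal_infP => _ [z _ <-]; have [cz|cz] := pselect (strict_feas c z).
    apply: le_trans (leeD2r _ (fmu_ge f c hb mu_gt0 z)).
    by apply: ereal_inf_lbound; exists z => // i; exact: ltW.
  by rewrite /qmu fmu_pinfty // addye ?leey.
have inf_lty : ereal_inf (range (qmu f g c b mu)) < +oo.
  apply: le_lt_trans (ereal_inf_lbound _) _; first by exists x.
  by rewrite qmu_lty gx fmu_fin // ltry.
move: S_fin; rewrite !fin_numE -!ltey -!ltNye inf_lty andbT => /andP[+ _].
by move=> /lt_le_trans; apply.
Qed.

End barrier_objective.

Definition fmu_grad {R : realType} {n m : nat} (f : 'rV[R]_n -> R)
    (c : 'rV[R]_n -> 'rV[R]_m) (b : R -> \bar R) (mu : R) z : 'rV[R]_n :=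
  grad f z +
  mu *: \sum_(i < m)
          derive1 (fine \o b) (c z ord0 i) *: row i (Defs.jacobian c z).

Section barrier_gradient.
Context {R : realType} {n m : nat} (f : 'rV[R]_n -> R)
  (c : 'rV[R]_n -> 'rV[R]_m) {b : R -> \bar R} (mu : R).
Hypotheses (hb : barrier b) (df : forall z, differentiable f z)
  (dc : forall z, differentiable c z).

Lemma is_diff_fmu_smooth z : strict_feas c z ->
  is_diff z (fmu_smooth f c b mu) (fun v => 'd f z v +
    mu * \sum_(i < m) 'd c z v ord0 i * derive1 (fine \o b) (c z ord0 i)).
Proof.
move=> cz.
have -> : fmu_smooth f c b mu =
    f + mu *: \sum_(i < m) ((fine \o b) \o (fun y => c y ord0 i)).
  by apply/funext => y; rewrite /fmu_smooth fct_sumE.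
have betaP i : is_diff (c z ord0 i) (fine \o b)
    ( *:%R^~ (derive1 (fine \o b) (c z ord0 i))).
  have db := barrier_derivable hb (cz i).
  by apply: DiffDef; [exact/derivable1_diffP | exact: deriv1E].
have sumP := is_diff_sum (fun i =>
  is_diff_comp (is_diff_mx_coord ord0 i (dc z)) (betaP i)).
have dfP := differentiableP (df z).
apply: is_diff_eq (is_diffD dfP (is_diffZ mu sumP)) _.
by apply/funext => v; rewrite /= fct_sumE.
Qed.

Lemma is_diff_fine_fmu z : strict_feas c z ->
  is_diff z (fun y => fine (fmu f c b mu y)) (fun v => 'd f z v +
    mu * \sum_(i < m) 'd c z v ord0 i * derive1 (fine \o b) (c z ord0 i)).
Proof.
move=> cz; have smoothP := is_diff_fmu_smooth z cz.
have cc : continuous c by move=> y; exact: differentiable_continuous.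
have fmu_smoothE : \near z, fine (fmu f c b mu z) = fmu_smooth f c b mu z.
  by apply: filterS (strict_feas_near cc cz) => y /(fmu_fin f c hb) ->.
by rewrite -[X in is_diff _ _ X](diff_val (f := fmu_smooth f c b mu));
  apply: near_eq_is_diff.
Qed.

Lemma grad_fine_fmu z : strict_feas c z ->
  grad (fun y => fine (fmu f c b mu y)) z = fmu_grad f c b mu z.
Proof.
move=> cz; have fmuP := is_diff_fine_fmu z cz.
apply/rowP => j; rewrite /grad diff_val !mxE summxE; congr (_ + _ * _).
by apply: eq_bigr => i _; rewrite !mxE mulrC.
Qed.

Lemma lipschitz_at_fmu_grad :
  loc_lipschitz_on setT (grad f) -> loc_lipschitz_on setT (Defs.jacobian c) ->
  forall z, strict_feas c z -> lipschitz_at z (fmu_grad f c b mu).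
Proof.
move=> gradL JL z cz.
apply: lipschitz_atD; first exact: lipschitz_at_loc_lipschitz_onT.
apply: lipschitz_atZ; first exact: lipschitz_at_cst.
apply: lipschitz_at_sum => i; apply: lipschitz_atZ.
  apply: lipschitz_at_comp (lipschitz_at_rV_coord c z i dc JL) _.
  exact: lipschitz_at_barrier_derive1 hb _ (cz i).
exact/lipschitz_at_row/lipschitz_at_loc_lipschitz_onT.
Qed.

End barrier_gradient.

Theorem lemma3p2 (R : realType) (n m : nat)
  (f : 'rV[R]_n -> R) (g : 'rV[R]_n -> \bar R) (c : 'rV[R]_n -> 'rV[R]_m)
  (b : R -> \bar R) :
  loc_lip_grad_on setT f ->
  (forall x, g x != -oo%E) -> eproper g -> lower_semicontinuous g ->
  prox_bounded g -> cont_rel_dom g ->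
  loc_lip_jacobian c ->
  ereal_inf [set ((f x)%:E + g x)%E | x in [set x | forall i, c x ord0 i <= 0]]
    \is a fin_num ->
  (exists x, edom g x /\ strict_feas c x) ->
  barrier b ->
  forall mu : R, 0 < mu ->
    (eproper (qmu f g c b mu) /\ lower_semicontinuous (qmu f g c b mu) /\
     edom (qmu f g c b mu) = edom g `&` strict_feas c /\
     ereal_inf (range (qmu f g c b mu)) \is a fin_num) /\
    (edom (fmu f c b mu) = strict_feas c /\
     loc_lip_grad_on (strict_feas c) (fun z => fine (fmu f c b mu z))).
Proof.
move=> [df gradL] gNy _ lsc_g _ _ [dc JL] inf_fin feas hb mu mu_gt0.
have {}df z : differentiable f z := df z I.
have cf : continuous f by move=> z; exact: differentiable_continuous.
have cc : continuous c by move=> z; exact: differentiable_continuous.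
split.
  split; [|split; [|split]].
  - split; first exact: qmu_neqNy.
    have [x domx] := feas; exists x.
    suff : edom (qmu f g c b mu) x by [].
    by rewrite (edom_qmu f g c hb mu_gt0 gNy).
  - apply: lower_semicontinuousD => //; first exact: fmu_neqNy.
    exact: lower_semicontinuous_fmu.
  - exact: edom_qmu.
  - exact: qmu_inf_fin_num.
split; first exact: edom_fmu.
split => [z /(is_diff_fine_fmu f c mu hb df dc) fmuP|]; first exact: ex_diff.
apply: loc_lipschitz_on_lipschitz_at (grad_fine_fmu f c mu hb df dc) _.
exact: lipschitz_at_fmu_grad.
Qed.
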